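(* No tree is H--cordial.
   Context: Graphs are finite and simple. A labeling of a graph $G$ is a map $f:E(G)\to\{-1,+1\}$. Given a labeling $f$, for each vertex $v$ define $f(v)=\sum_{e\in I(v)} f(e)$, where $I(v)$ is the set of edges incident to $v$. For an integer $c$, $e_f(c)$ denotes the number of edges with label $c$, and $v_f(c)$ the number of vertices $v$ with $f(v)=c$. A labeling $f$ is H--cordial if there is a positive constant $K$ such that $|f(v)|=K$ for every vertex $v$, $|e_f(1)-e_f(-1)|\le 1$, and $|v_f(K)-v_f(-K)|\le 1$. A graph is H--cordial if it admits an H--cordial labeling. *)

From mathcomp Require Import all_boot all_order all_algebra.
Set Implicit Arguments. Unset Strict Implicit. Unset Printing Implicit Defensive.
Import Order.TTheory GRing.Theory Num.Theory.
Local Open Scope ring_scope.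

Definition simple_graph (T : finType) (e : rel T) : Prop :=
  symmetric e /\ irreflexive e.

Definition edges (T : finType) (e : rel T) : {set {set T}} :=
  [set [set x; y] | x in T, y in T & e x y].

Definition is_tree (T : finType) (e : rel T) : Prop :=
  [/\ 0 < #|T|,
      (forall x y : T, connect e x y) &
      ~ (exists c : seq T, [&& uniq c, 2 < size c & cycle e c])]%N.

Definition labeling (T : finType) (e : rel T) (f : {set T} -> int) : Prop :=
  forall E, E \in edges e -> f E = 1 \/ f E = -1.

Definition vlabel (T : finType) (e : rel T) (f : {set T} -> int) (v : T) : int :=
  \sum_(E in edges e | v \in E) f E.

Definition e_f (T : finType) (e : rel T) (f : {set T} -> int) (c : int) : nat :=
  #|[set E in edges e | f E == c]|.
Definition v_f (T : finType) (e : rel T) (f : {set T} -> int) (c : int) : nat :=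
  #|[set v : T | vlabel e f v == c]|.

Definition H_cordial_labeling (T : finType) (e : rel T) (f : {set T} -> int) : Prop :=
  labeling e f /\
  exists K : int, [/\ 0 < K,
     (forall v : T, `|vlabel e f v| = K),
     `|(e_f e f 1)%:Z - (e_f e f (-1))%:Z| <= 1 &
     `|(v_f e f K)%:Z - (v_f e f (-K))%:Z| <= 1].

Definition H_cordial (T : finType) (e : rel T) : Prop :=
  exists f : {set T} -> int, H_cordial_labeling e f.

From mathcomp Require Import all_boot all_order all_algebra.
From mathcomp Require Import zify.
Set Implicit Arguments. Unset Strict Implicit. Unset Printing Implicit Defensive.
Import Order.TTheory GRing.Theory Num.Theory.

(* Summing the vertex labels counts every edge label twice, so
   K (v_f K - v_f (-K)) = 2 (e_f 1 - e_f (-1)).  A tree has one more vertex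
   than edges, hence the two differences have opposite parities.  Both lie in
   {-1, 0, 1}: if the vertex difference is 0 the edge difference must be 0 too,
   of the same parity; otherwise the edge difference is even, hence 0, and then
   K = 0.
   A tree has one more vertex than edges because a connected vertex set can be
   grown one crossing edge at a time, and acyclicity makes the new vertex
   adjacent to exactly one old vertex, so each step adds one vertex and one
   edge. *)

Lemma edgesP (T : finType) (e : rel T) E :
  reflect (exists x y, e x y /\ E = [set x; y]) (E \in edges e).
Proof.
apply: (iffP imset2P).
  by case=> x y _; rewrite inE => /andP[_ exy] ->; exists x, y.
by case=> x [y [exy ->]]; exists x y; rewrite ?inE ?exy.
Qed.

Definition induced (T : finType) (e : rel T) (S : {set T}) : rel T :=
  [rel x y | [&& e x y, x \in S & y \in S]].

Definition induced_connected (T : finType) (e : rel T) (S : {set T}) : Prop :=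
  forall x y, x \in S -> y \in S -> connect (induced e S) x y.

Definition inner_edges (T : finType) (e : rel T) (S : {set T}) : {set {set T}} :=
  [set E in edges e | E \subset S].

Lemma path_induced_all (T : finType) (e : rel T) S x p :
  path (induced e S) x p -> all (mem S) p.
Proof. by elim: p x => //= y p IH x /andP[/and3P[_ _ ->] /IH]. Qed.

Section TreeEdges.

Variables (T : finType) (e : rel T).
Hypotheses (e_sym : symmetric e) (e_irr : irreflexive e).

Lemma exists_crossing_edge (S : {set T}) r s :
  connect e r s -> r \in S -> s \notin S ->
  exists u v, [/\ u \in S, v \notin S & e u v].
Proof.
move=> crs rS sS.
pose crossing (p : T * T) := [&& p.1 \in S, p.2 \notin S & e p.1 p.2].
have [[u v] /and3P[uS vS euv] | no_crossing] := pickP crossing.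
  by exists u, v.
have S_closed : closed e (mem S).
  move=> x y exy /=; apply/idP/idP => [xS|yS]; apply/negPn/negP => nS.
    by have := no_crossing (x, y); rewrite /crossing /= xS nS exy.
  by have := no_crossing (y, x); rewrite /crossing /= yS nS e_sym exy.
by move: sS; rewrite -(closed_connect S_closed crs) rS.
Qed.

Hypothesis e_acyclic :
  ~ exists c : seq T, [&& uniq c, (2 < size c)%N & cycle e c].

Lemma acyclic_neighbour_unique (S : {set T}) u v w :
  induced_connected e S -> u \in S -> w \in S -> v \notin S ->
  e u v -> e v w -> w = u.
Proof.
move=> connS uS wS vS euv evw; apply/eqP/negPn/negP => wu.
have /connectP[p0 p0_path p0_last] := connS w u wS uS.
case/shortenP: p0_path p0_last => p p_path p_uniq _ p_last.
have v_notin_p : v \notin w :: p.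
  rewrite inE negb_or; apply/andP; split; first by apply: contraNneq vS => ->.
  by apply: contraNN vS => /(allP (path_induced_all p_path)).
case: p p_path p_last p_uniq v_notin_p => [|a p] p_path p_last p_uniq v_notin_p.
  by rewrite p_last eqxx in wu.
apply: e_acyclic; exists [:: v, w, a & p].
rewrite [uniq _]cons_uniq v_notin_p p_uniq /=.
rewrite rcons_path evw /= -[last a p]/(last w (a :: p)) -p_last euv andbT.
by apply: sub_path p_path => x y /and3P[].
Qed.

Lemma induced_connectedU1 (S : {set T}) u v :
  induced_connected e S -> u \in S -> e u v -> induced_connected e (v |: S).
Proof.
move=> connS uS euv.
have sym_ind : connect_sym (induced e (v |: S)).
  apply: sym_connect_sym => x y.
  by rewrite /induced /= e_sym [(y \in _) && _]andbC.
have connSvS x y : x \in S -> y \in S -> connect (induced e (v |: S)) x y.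
  move=> xS yS; apply: connect_sub (connS x y xS yS) => a b /and3P[eab aS bS].
  by apply: connect1; rewrite /induced /= eab !inE aS bS !orbT.
have c_uv : connect (induced e (v |: S)) u v.
  by apply: connect1; rewrite /induced /= euv !inE uS eqxx !orbT.
have c_xv x : x \in S -> connect (induced e (v |: S)) x v.
  by move=> xS; apply: connect_trans (connSvS x u xS uS) c_uv.
move=> x y; rewrite !inE => /predU1P[->|xS] /predU1P[->|yS] //.
- by rewrite sym_ind; apply: c_xv.
- exact: c_xv.
- exact: connSvS.
Qed.

Lemma inner_edgesU1 (S : {set T}) u v :
  u \in S -> v \notin S -> e u v -> (forall w, w \in S -> e v w -> w = u) ->
  inner_edges e (v |: S) = [set u; v] |: inner_edges e S.
Proof.
move=> uS vS euv v_nb; apply/setP => E; rewrite !inE; apply/andP/predU1P.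
  case=> /edgesP[x [y [exy ->]]].
  rewrite subUset !sub1set !inE => /andP[/predU1P[xv|xS] /predU1P[yv|yS]].
  - by rewrite xv yv e_irr in exy.
  - by left; subst x; rewrite (v_nb y yS exy) setUC.
  - by left; subst y; rewrite (v_nb x xS) // e_sym.
  - by right; rewrite subUset !sub1set xS yS !andbT; apply/edgesP; exists x, y.
case=> [->|/andP[E_e E_S]]; split.
- by apply/edgesP; exists u, v.
- by rewrite subUset !sub1set !inE uS eqxx orbT.
- exact: E_e.
- exact: subset_trans E_S (subsetUr _ _).
Qed.

Lemma card_inner_edgesU1 (S : {set T}) u v :
  u \in S -> v \notin S -> e u v -> (forall w, w \in S -> e v w -> w = u) ->
  #|inner_edges e (v |: S)| = #|inner_edges e S|.+1.
Proof.
move=> uS vS euv v_nb; rewrite (inner_edgesU1 uS vS euv v_nb) cardsU1.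
by rewrite inE subUset !sub1set (negbTE vS) !andbF.
Qed.

Lemma inner_edges1 x : inner_edges e [set x] = set0.
Proof.
apply/setP => E; rewrite !inE; apply/andP => -[/edgesP[y [z [eyz ->]]]].
rewrite subUset !sub1set !inE => /andP[/eqP y_x /eqP z_x].
by rewrite y_x z_x e_irr in eyz.
Qed.

Hypothesis e_connected : forall x y, connect e x y.

Lemma exists_subtree k : (k < #|T|)%N ->
  exists S : {set T},
    [/\ #|S| = k.+1, induced_connected e S & #|inner_edges e S| = k].
Proof.
elim: k => [|k IHk] k_lt.
  have [r _] := card_gt0P k_lt.
  exists [set r]; split; rewrite ?cards1 ?inner_edges1 ?cards0 //.
  by move=> x y /set1P-> /set1P->.
have [S [card_S connS inner_S]] := IHk (ltnW k_lt).
have [r rS] : exists r, r \in S by apply/card_gt0P; rewrite card_S.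
have /card_gt0P[s] : (0 < #|~: S|)%N by have := cardsC S; lia.
rewrite inE => sS.
have [u [v [uS vS euv]]] := exists_crossing_edge (e_connected r s) rS sS.
have v_nb w : w \in S -> e v w -> w = u.
  by move=> wS; apply: acyclic_neighbour_unique connS uS wS vS euv.
exists (v |: S); split.
- by rewrite cardsU1 vS card_S.
- exact: induced_connectedU1 connS uS euv.
- by rewrite (card_inner_edgesU1 uS vS euv v_nb) inner_S.
Qed.

Lemma card_edges_tree : (0 < #|T|)%N -> #|edges e|.+1 = #|T|.
Proof.
move=> T_gt0.
have /exists_subtree[S [card_S _ inner_S]] : (#|T|.-1 < #|T|)%N.
  by rewrite ltn_predL.
have S_T : S = setT.
  by apply/eqP; rewrite eqEcard subsetT cardsT card_S (prednK T_gt0) leqnn.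
suff <- : inner_edges e S = edges e by rewrite inner_S (prednK T_gt0).
by apply/setP => E; rewrite S_T inE subsetT andbT.
Qed.

End TreeEdges.

Local Open Scope ring_scope.

Lemma sum_vlabel (T : finType) (e : rel T) (f : {set T} -> int) :
  irreflexive e -> \sum_v vlabel e f v = 2 * \sum_(E in edges e) f E.
Proof.
move=> e_irr; rewrite /vlabel (exchange_big_dep (mem (edges e))) /=; last first.
  by move=> v E _ /andP[].
rewrite mulr_sumr; apply: eq_bigr => _ /[dup] /edgesP[x [y [exy ->]]] xy_e.
have x_neq_y : x != y by apply: contraTneq exy => ->; rewrite e_irr.
by rewrite xy_e /= sumr_const cards2 x_neq_y mulr_natl.
Qed.

Section SignedCounts.

Variables (I : finType) (A : {pred I}) (F : I -> int) (c : int).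
Hypotheses (c_neq0 : c != 0) (F_pm : {in A, forall i, F i = c \/ F i = - c}).

Lemma set_eqN_neq : [set i in A | F i == - c] = [set i in A | F i != c].
Proof.
apply/setP => i; rewrite !inE; case: (boolP (i \in A)) => //= iA.
by case: (F_pm iA) => ->; lia.
Qed.

Lemma sum_signed_counts :
  \sum_(i in A) F i =
    c * (#|[set i in A | F i == c]|%:Z - #|[set i in A | F i == - c]|%:Z).
Proof.
rewrite set_eqN_neq (bigID (fun i => F i == c)) /=.
rewrite (eq_bigr (fun=> c)); last by move=> i /andP[_ /eqP].
rewrite [X in _ + X](eq_bigr (fun=> - c)); last first.
  by move=> i /andP[iA]; case: (F_pm iA) => ->; rewrite ?eqxx.
by rewrite !sumr_const mulrBr -!natz !mulr_natr mulNrn !cardsE.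
Qed.

Lemma card_signed_counts :
  #|A| = (#|[set i in A | F i == c]| + #|[set i in A | F i == - c]|)%N.
Proof.
rewrite set_eqN_neq -(cardID (fun i => F i == c) A).
by congr (_ + _)%N; apply: eq_card => i; rewrite !inE /= andbC.
Qed.

End SignedCounts.

Lemma signed_counts_unbalanced (K a1 a2 b1 b2 : int) :
  0 < K -> K * (b1 - b2) = 2 * (a1 - a2) -> b1 + b2 = a1 + a2 + 1 ->
  `|a1 - a2| <= 1 -> `|b1 - b2| <= 1 -> False.
Proof.
move=> K_gt0 sums counts a_bal b_bal.
have [d|[d|d]] : b1 - b2 = 0 \/ b1 - b2 = 1 \/ b1 - b2 = -1 by lia.
all: rewrite d ?mulr0 ?mulr1 ?mulrN1 in sums; lia.
Qed.

Theorem corollary1 (T : finType) (e : rel T) :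
  simple_graph e -> is_tree e -> ~ H_cordial e.
Proof.
move=> [e_sym e_irr] [T_gt0 e_connected e_acyclic].
move=> [f [f_pm [K [K_gt0 vlabel_K e_bal v_bal]]]].
have K_neq0 : K != 0 by rewrite gt_eqF.
have vlabel_pm : {in T, forall v, vlabel e f v = K \/ vlabel e f v = - K}.
  by move=> v _; have := vlabel_K v; lia.
have card_T : #|T| = (v_f e f K + v_f e f (- K))%N :=
  card_signed_counts K_neq0 vlabel_pm.
have card_E : #|edges e| = (e_f e f 1 + e_f e f (-1))%N :=
  card_signed_counts (oner_neq0 _) f_pm.
have card_tree := card_edges_tree e_sym e_irr e_acyclic e_connected T_gt0.
have sums := sum_vlabel f e_irr.
rewrite (sum_signed_counts K_neq0 vlabel_pm) in sums.
rewrite (sum_signed_counts (oner_neq0 _) f_pm) mul1r in sums.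
apply: (signed_counts_unbalanced K_gt0 _ _ e_bal v_bal); first exact: sums.
lia.
Qed.
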